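(* Let $X$ be a compact Hausdorff space and let $(\mathcal{A},\mathfrak{T})$ be a unital relaxed C*-algebra. Then the set $C(X)\boxtimes(\mathcal{A},\mathfrak{T})$ of all functions $f\colon X\to\mathcal{A}$ that are norm-bounded and continuous with respect to the relaxed topology $\mathfrak{T}$ is a C*-algebra with respect to the point-wise operations and the supremum norm $\|f\|_\infty=\sup_{x\in X}\|f(x)\|$.
   Context: A relaxed C*-algebra is a pair $(\mathcal{A},\mathfrak{T})$ where $\mathcal{A}$ is a unital C*-algebra and $\mathfrak{T}$ is a locally convex topology on $\mathcal{A}$ (the relaxed topology) determined by a separating family $S$ of norm-continuous seminorms on $\mathcal{A}$, such that multiplication, involution and addition of $\mathcal{A}$ are (jointly) continuous with respect to $\mathfrak{T}$. *)

From HB Require Import structures.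
From mathcomp Require Import all_boot all_order all_algebra.
From mathcomp Require Import all_classical all_reals all_analysis.
From mathcomp.real_closed Require Import complex.
Set Implicit Arguments. Unset Strict Implicit. Unset Printing Implicit Defensive.
Import Order.TTheory GRing.Theory Num.Theory.
Local Open Scope classical_set_scope.
Local Open Scope ring_scope.

Record star_alg_ops (R : realType) (V : Type) := StarAlgOps {
  sa_zero : V;
  sa_add : V -> V -> V;
  sa_opp : V -> V;
  sa_scale : R[i] -> V -> V;
  sa_mul : V -> V -> V;
  sa_star : V -> V;
  sa_norm : V -> R }.

Section Defs.
Variables (R : realType) (V : Type) (o : star_alg_ops R V).
Local Notation "'0v'" := (sa_zero o).
Local Notation "x '+v' y" := (sa_add o x y) (at level 50, left associativity).
Local Notation "'-v' x" := (sa_opp o x) (at level 35).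
Local Notation "x '-v' y" := (sa_add o x (sa_opp o y)) (at level 50, left associativity).
Local Notation "a '*:v' x" := (sa_scale o a x) (at level 40).
Local Notation "x '*v' y" := (sa_mul o x y) (at level 40, left associativity).
Local Notation "x '^*v'" := (sa_star o x) (at level 2).
Local Notation nv := (sa_norm o).

(* [S] (a subset of V), with the operations [o] restricted to it, is a
   (not necessarily unital) C*-algebra: a complex Banach *-algebra whose norm
   is submultiplicative and satisfies the C*-identity ||x^* x|| = ||x||^2. *)
Definition is_Cstar_algebra (S : set V) : Prop :=
  (
      S 0v /\
      (forall x y, S x -> S y -> S (x +v y)) /\
      (forall x, S x -> S (-v x)) /\
      (forall a x, S x -> S (a *:v x)) /\
      (forall x y, S x -> S y -> S (x *v y))  /\
      (forall x, S x -> S (x ^*v))) /\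
  (
      (forall x y z, S x -> S y -> S z -> x +v (y +v z) = (x +v y) +v z) /\
      (forall x y, S x -> S y -> x +v y = y +v x) /\
      (forall x, S x -> 0v +v x = x) /\
      (forall x, S x -> -v x +v x = 0v) /\
      (forall a x y, S x -> S y -> a *:v (x +v y) = a *:v x +v a *:v y) /\
      (forall a b x, S x -> (a + b) *:v x = a *:v x +v b *:v x) /\
      (forall a b x, S x -> (a * b) *:v x = a *:v (b *:v x))  /\
      (forall x, S x -> 1 *:v x = x)) /\
  (
      (forall x y z, S x -> S y -> S z -> x *v (y *v z) = (x *v y) *v z) /\
      (forall x y z, S x -> S y -> S z -> (x +v y) *v z = x *v z +v y *v z) /\
      (forall x y z, S x -> S y -> S z -> x *v (y +v z) = x *v y +v x *v z) /\
      (forall a x y, S x -> S y -> a *:v (x *v y) = (a *:v x) *v y)  /\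
      (forall a x y, S x -> S y -> a *:v (x *v y) = x *v (a *:v y))) /\
  (
      (forall x, S x -> (x ^*v) ^*v = x) /\
      (forall x y, S x -> S y -> (x +v y) ^*v = x ^*v +v y ^*v) /\
      (forall a x, S x -> (a *:v x) ^*v = (conjc a) *:v (x ^*v))  /\
      (forall x y, S x -> S y -> (x *v y) ^*v = y ^*v *v x ^*v)) /\
  (
      (forall x, S x -> 0 <= nv (x)) /\
      (forall x, S x -> nv (x) = 0 -> x = 0v) /\
      (forall x y, S x -> S y -> nv (x +v y) <= (nv (x) + nv (y))) /\
      (forall a x, S x -> nv (a *:v x) = (Normc.normc a * nv (x))) /\
      (forall x y, S x -> S y -> nv (x *v y) <= (nv (x) * nv (y)))  /\
      (forall x, S x -> nv (x ^*v *v x) = nv (x) ^+ 2)) /\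
  (forall u : nat -> V, (forall n, S (u n)) ->
     (forall e : R, 0 < e -> exists N, forall m n, (N <= m)%N -> (N <= n)%N ->
        nv (u m -v u n) < e) ->
     exists l, S l /\ (forall e : R, 0 < e -> exists N, forall n, (N <= n)%N ->
        nv (u n -v l) < e)).

Definition is_unit_of (S : set V) (one : V) : Prop :=
  S one /\ (forall x, S x -> one *v x = x /\ x *v one = x).

Definition is_seminorm (p : V -> R) : Prop :=
  (forall x, 0 <= p x) /\
  (forall x y, p (x +v y) <= (p x + p y)) /\
  (forall a x, p (a *:v x) = (Normc.normc a * p x)).

Definition norm_continuous (p : V -> R) : Prop :=
  forall x (e : R), 0 < e -> exists d : R, 0 < d /\
    forall y, nv (y -v x) < d -> `|p y - p x| < e.

(* Neighbourhoods of [a] in the locally convex topology determined by the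
   family of seminorms [Sf]: sets containing a basic set
   {b | p (b -v a) < e for all p in a finite subfamily}. *)
Definition relaxed_nbhs (Sf : set (V -> R)) (a : V) (U : set V) : Prop :=
  exists (ps : seq (V -> R)) (e : R), (forall p, p \in ps -> Sf p) /\ 0 < e /\
    (forall b, (forall p, p \in ps -> p (b -v a) < e) -> U b).

Definition is_relaxed_Cstar_algebra (one : V) (Sf : set (V -> R)) : Prop :=
  ( is_Cstar_algebra setT /\
      is_unit_of setT one /\
      (forall p, Sf p -> is_seminorm p /\ norm_continuous p) /\
      (forall x, (forall p, Sf p -> p x = 0) -> x = 0v)  /\
      [/\ (forall a b W, relaxed_nbhs Sf (a +v b) W -> exists U W',
             relaxed_nbhs Sf a U /\ relaxed_nbhs Sf b W' /\
             (forall x y, U x -> W' y -> W (x +v y))),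
          (forall a b W, relaxed_nbhs Sf (a *v b) W -> exists U W',
             relaxed_nbhs Sf a U /\ relaxed_nbhs Sf b W' /\
             (forall x y, U x -> W' y -> W (x *v y))) &
          (forall a W, relaxed_nbhs Sf (a ^*v) W -> exists U,
             relaxed_nbhs Sf a U /\ (forall x, U x -> W (x ^*v)))]).

End Defs.

Definition fun_ops (R : realType) (X V : Type) (o : star_alg_ops R V) :
  star_alg_ops R (X -> V) :=
  @StarAlgOps R (X -> V)
    (fun _ => sa_zero o)
    (fun f g x => sa_add o (f x) (g x))
    (fun f x => sa_opp o (f x))
    (fun a f x => sa_scale o a (f x))
    (fun f g x => sa_mul o (f x) (g x))
    (fun f x => sa_star o (f x))
    (fun f => sup [set sa_norm o (f x) | x in [set: X]]).

Definition CX_boxtimes (R : realType) (X : topologicalType) (V : Type)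
  (o : star_alg_ops R V) (Sf : set (V -> R)) : set (X -> V) :=
  [set f : X -> V | (exists M : R, forall x : X, sa_norm o (f x) <= M) /\
           (forall (x : X) (U : set V), relaxed_nbhs o Sf (f x) U ->
              \forall y \near x, U (f y))].

From HB Require Import structures.
From mathcomp Require Import all_boot all_order all_algebra.
From mathcomp Require Import all_classical all_reals all_analysis.
From mathcomp.real_closed Require Import complex.
From mathcomp Require Import lra.
Set Implicit Arguments. Unset Strict Implicit. Unset Printing Implicit Defensive.
Import Order.TTheory GRing.Theory Num.Theory.
Local Open Scope classical_set_scope.
Local Open Scope ring_scope.

(* All algebraic laws hold pointwise. The supremum norm inherits subadditivity
   and submultiplicativity pointwise, and homogeneity and the C*-identity
   because [r |-> c r] and [r |-> r ^ 2] commute with suprema of bounded sets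
   of nonnegative reals. For completeness, a Cauchy sequence for the supremum
   norm converges uniformly to its pointwise limit; this limit is bounded, and
   it is continuous for the relaxed topology because every seminorm of the
   family is small on a norm ball around 0, so the classical e/3 argument
   works seminorm by seminorm. *)

Section SupRange.
Variables (R : realType) (X : Type).
Implicit Types (g : X -> R) (M : R).

Lemma ler_sup_range g M x : (forall y, g y <= M) -> g x <= sup (range g).
Proof. by move=> gM; apply: ub_le_sup; [exists M => _ [y _ <-] | exists x]. Qed.

(* The bound [0 <= M] covers an empty [X], where [sup set0 = 0]. *)
Lemma sup_range_le g M : 0 <= M -> (forall x, g x <= M) -> sup (range g) <= M.
Proof.
move=> M0 gM; have [->|/set0P ne] := eqVneq (range g) set0; first by rewrite sup0.
by apply: ge_sup ne _ => _ [x _ <-].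
Qed.

Lemma sup_range_ge0 g M : (forall x, 0 <= g x) -> (forall x, g x <= M) ->
  0 <= sup (range g).
Proof.
move=> g0 gM; have [->|/set0P[_ [x _ _]]] := eqVneq (range g) set0.
  by rewrite sup0.
exact: le_trans (g0 x) (ler_sup_range x gM).
Qed.

Lemma sup_rangeZ g M (c : R) : 0 <= c -> (forall x, 0 <= g x) ->
  (forall x, g x <= M) -> sup (range (fun x => c * g x)) = c * sup (range g).
Proof.
move=> c0 g0 gM; have sg0 := sup_range_ge0 g0 gM.
have cgM x : c * g x <= c * M by rewrite ler_wpM2l.
apply/le_anti/andP; split.
  apply: sup_range_le => [|x]; first exact: mulr_ge0.
  by rewrite ler_wpM2l // (ler_sup_range _ gM).
have [->|c_neq0] := eqVneq c 0.
  by rewrite mul0r; apply: (@sup_range_ge0 _ 0) => x; rewrite mul0r.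
have c_gt0 : 0 < c by rewrite lt_def c_neq0.
rewrite -ler_pdivlMl //; apply: sup_range_le => [|x].
  by rewrite mulr_ge0 ?invr_ge0 //; apply: sup_range_ge0 cgM => x; rewrite mulr_ge0.
by rewrite ler_pdivlMl // (ler_sup_range _ cgM).
Qed.

Lemma sup_range_sqr g M : (forall x, 0 <= g x) -> (forall x, g x <= M) ->
  sup (range (fun x => g x ^+ 2)) = sup (range g) ^+ 2.
Proof.
move=> g0 gM; have sg0 := sup_range_ge0 g0 gM.
have g2M x : g x ^+ 2 <= M ^+ 2 by rewrite lerXn2r ?nnegrE // (le_trans (g0 x)).
have sg20 := sup_range_ge0 (fun x => exprn_ge0 2 (g0 x)) g2M.
apply/le_anti/andP; split.
  apply: sup_range_le => [|x]; first exact: exprn_ge0.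
  by rewrite lerXn2r ?nnegrE // (ler_sup_range _ gM).
rewrite -(sqr_sqrtr sg20) lerXn2r ?nnegrE ?sqrtr_ge0 //.
apply: sup_range_le => [|x]; first exact: sqrtr_ge0.
by rewrite -(ger0_norm (g0 x)) -sqrtr_sqr ler_wsqrtr // (ler_sup_range _ g2M).
Qed.

End SupRange.

Lemma normc_ge0 (R : rcfType) (a : R[i]) : 0 <= Normc.normc a.
Proof. by case: a => x y; exact: sqrtr_ge0. Qed.

Section StarAlgebraOps.
Variables (R : realType) (V : Type) (o : star_alg_ops R V).
Local Notation "'0v'" := (sa_zero o).
Local Notation "x '+v' y" := (sa_add o x y) (at level 50, left associativity).
Local Notation "'-v' x" := (sa_opp o x) (at level 35).
Local Notation "x '-v' y" := (sa_add o x (sa_opp o y)) (at level 50, left associativity).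
Local Notation "a '*:v' x" := (sa_scale o a x) (at level 40).
Local Notation "x '*v' y" := (sa_mul o x y) (at level 40, left associativity).
Local Notation "x '^*v'" := (sa_star o x) (at level 2).
Local Notation nv := (sa_norm o).

Section CstarAlgebra.
Hypothesis hV : is_Cstar_algebra o setT.
Implicit Types (x y z : V) (a b : R[i]).

Lemma sa_addrA x y z : x +v (y +v z) = (x +v y) +v z.
Proof. by case: hV => _ [[+ _] _]; apply. Qed.
Lemma sa_addrC x y : x +v y = y +v x.
Proof. by case: hV => _ [[_ [+ _]] _]; apply. Qed.
Lemma sa_add0r x : 0v +v x = x.
Proof. by case: hV => _ [[_ [_ [+ _]]] _]; apply. Qed.
Lemma sa_addNr x : -v x +v x = 0v.
Proof. by case: hV => _ [[_ [_ [_ [+ _]]]] _]; apply. Qed.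
Lemma sa_scalerDr a x y : a *:v (x +v y) = a *:v x +v a *:v y.
Proof. by case: hV => _ [[_ [_ [_ [_ [+ _]]]]] _]; apply. Qed.
Lemma sa_scalerDl a b x : (a + b) *:v x = a *:v x +v b *:v x.
Proof. by case: hV => _ [[_ [_ [_ [_ [_ [+ _]]]]]] _]; apply. Qed.
Lemma sa_scalerA a b x : a *:v (b *:v x) = (a * b) *:v x.
Proof. by case: hV => _ [[_ [_ [_ [_ [_ [_ [scA _]]]]]]] _]; rewrite scA. Qed.
Lemma sa_scale1r x : 1 *:v x = x.
Proof. by case: hV => _ [[_ [_ [_ [_ [_ [_ [_ +]]]]]]] _]; apply. Qed.
Lemma sa_starK x : x ^*v ^*v = x.
Proof. by case: hV => _ [_ [_ [[+ _] _]]]; apply. Qed.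
Lemma sa_norm_ge0 x : 0 <= nv x.
Proof. by case: hV => _ [_ [_ [_ [[+ _] _]]]]; apply. Qed.
Lemma sa_norm_eq0 x : nv x = 0 -> x = 0v.
Proof. by case: hV => _ [_ [_ [_ [[_ [+ _]] _]]]]; apply. Qed.
Lemma sa_normD x y : nv (x +v y) <= nv x + nv y.
Proof. by case: hV => _ [_ [_ [_ [[_ [_ [+ _]]] _]]]]; apply. Qed.
Lemma sa_normZ a x : nv (a *:v x) = Normc.normc a * nv x.
Proof. by case: hV => _ [_ [_ [_ [[_ [_ [_ [+ _]]]] _]]]]; apply. Qed.
Lemma sa_normM x y : nv (x *v y) <= nv x * nv y.
Proof. by case: hV => _ [_ [_ [_ [[_ [_ [_ [_ [+ _]]]]] _]]]]; apply. Qed.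
Lemma sa_norm_Cstar x : nv (x ^*v *v x) = nv x ^+ 2.
Proof. by case: hV => _ [_ [_ [_ [[_ [_ [_ [_ [_ +]]]]] _]]]]; apply. Qed.

Lemma sa_addr0 x : x +v 0v = x.
Proof. by rewrite sa_addrC sa_add0r. Qed.
Lemma sa_subrr x : x -v x = 0v.
Proof. by rewrite sa_addrC sa_addNr. Qed.
Lemma sa_addrI x y z : x +v y = x +v z -> y = z.
Proof.
by move=> e; rewrite -[y]sa_add0r -(sa_addNr x) -sa_addrA e sa_addrA sa_addNr sa_add0r.
Qed.
Lemma sa_scale0r x : 0 *:v x = 0v.
Proof. by apply: (@sa_addrI (0 *:v x)); rewrite sa_addr0 -sa_scalerDl addr0. Qed.
Lemma sa_scaleN1r x : (-1) *:v x = -v x.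
Proof.
apply: (@sa_addrI x).
by rewrite sa_subrr -{1}[x]sa_scale1r -sa_scalerDl subrr sa_scale0r.
Qed.
Lemma sa_opprK x : -v (-v x) = x.
Proof. by rewrite -!sa_scaleN1r sa_scalerA mulrNN mulr1 sa_scale1r. Qed.
Lemma sa_opprD x y : -v (x +v y) = -v x +v -v y.
Proof. by rewrite -!sa_scaleN1r sa_scalerDr. Qed.
Lemma sa_oppr0 : -v 0v = 0v.
Proof. by rewrite -[-v 0v]sa_addr0 sa_addNr. Qed.
Lemma sa_subr0 x : x -v 0v = x.
Proof. by rewrite sa_oppr0 sa_addr0. Qed.
Lemma sa_subrK x y : x -v y +v y = x.
Proof. by rewrite -sa_addrA sa_addNr sa_addr0. Qed.
Lemma sa_opprB x y : -v (x -v y) = y -v x.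
Proof. by rewrite sa_opprD sa_opprK sa_addrC. Qed.
Lemma sa_sub_split y x z : x -v z = (x -v y) +v (y -v z).
Proof. by rewrite sa_addrA sa_subrK. Qed.
Lemma sa_scalerBr a x y : a *:v (x -v y) = a *:v x -v a *:v y.
Proof. by rewrite sa_scalerDr -!sa_scaleN1r !sa_scalerA mulrC. Qed.

Lemma sa_norm_star x : nv (x ^*v) = nv x.
Proof.
suff le_star y : nv y <= nv (y ^*v).
  by apply/le_anti; rewrite le_star -{2}[x]sa_starK le_star.
have [->|y_neq0] := eqVneq (nv y) 0; first exact: sa_norm_ge0.
have y_gt0 : 0 < nv y by rewrite lt_def y_neq0 sa_norm_ge0.
by rewrite -(ler_pM2r y_gt0) -expr2 -sa_norm_Cstar sa_normM.
Qed.

Section Seminorm.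
Variable p : V -> R.
Hypothesis hp : is_seminorm o p.

Lemma seminorm_ge0 x : 0 <= p x. Proof. by case: hp. Qed.
Lemma seminormD x y : p (x +v y) <= p x + p y. Proof. by case: hp => _ []. Qed.
Lemma seminormZ a x : p (a *:v x) = Normc.normc a * p x. Proof. by case: hp => _ []. Qed.
Lemma seminorm0 : p 0v = 0.
Proof. by rewrite -(sa_scale0r 0v) seminormZ Normc.normc0 mul0r. Qed.
Lemma seminormN x : p (-v x) = p x.
Proof. by rewrite -sa_scaleN1r seminormZ normcN Normc.normc1 mul1r. Qed.
Lemma seminorm_distC x y : p (x -v y) = p (y -v x).
Proof. by rewrite -sa_opprB seminormN. Qed.
Lemma seminorm_distD y x z : p (x -v z) <= p (x -v y) + p (y -v z).
Proof. by rewrite (sa_sub_split y) seminormD. Qed.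

End Seminorm.

Lemma sa_norm_seminorm : is_seminorm o nv.
Proof. by split; [exact: sa_norm_ge0 | split; [exact: sa_normD | exact: sa_normZ]]. Qed.

Section SupNorm.
Variable X : Type.
Implicit Types (f g : X -> V) (t : X).

Definition norm_bounded f := exists M, forall t, nv (f t) <= M.

Local Notation snorm f := (sup (range (fun t => nv (f t)))).

Lemma norm_bounded0 : norm_bounded (fun=> 0v).
Proof. by exists 0 => t; rewrite (seminorm0 sa_norm_seminorm). Qed.
Lemma norm_boundedD f g : norm_bounded f -> norm_bounded g ->
  norm_bounded (fun t => f t +v g t).
Proof.
by move=> [M fM] [N gN]; exists (M + N) => t; rewrite (le_trans (sa_normD _ _)) ?lerD.
Qed.
Lemma norm_boundedN f : norm_bounded f -> norm_bounded (fun t => -v f t).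
Proof. by move=> [M fM]; exists M => t; rewrite (seminormN sa_norm_seminorm). Qed.
Lemma norm_boundedZ a f : norm_bounded f -> norm_bounded (fun t => a *:v f t).
Proof.
move=> [M fM]; exists (Normc.normc a * M) => t.
by rewrite sa_normZ ler_wpM2l ?normc_ge0.
Qed.
Lemma norm_boundedM f g : norm_bounded f -> norm_bounded g ->
  norm_bounded (fun t => f t *v g t).
Proof.
move=> [M fM] [N gN]; exists (M * N) => t.
by rewrite (le_trans (sa_normM _ _)) ?ler_pM ?sa_norm_ge0.
Qed.
Lemma norm_bounded_star f : norm_bounded f -> norm_bounded (fun t => (f t)^*v).
Proof. by move=> [M fM]; exists M => t; rewrite sa_norm_star. Qed.
Lemma norm_bounded_approx f g c : norm_bounded g ->
  (forall t, nv (f t -v g t) <= c) -> norm_bounded f.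
Proof.
move=> [M gM] fgc; exists (c + M) => t.
by rewrite -(sa_subrK (f t) (g t)) (le_trans (sa_normD _ _)) ?lerD.
Qed.

Lemma snorm_ub f t : norm_bounded f -> nv (f t) <= snorm f.
Proof. by case=> M fM; exact: ler_sup_range fM. Qed.
Lemma snorm_ge0 f : norm_bounded f -> 0 <= snorm f.
Proof. by case=> M fM; exact: sup_range_ge0 (fun t => sa_norm_ge0 (f t)) fM. Qed.
Lemma snorm_eq0 f : norm_bounded f -> snorm f = 0 -> f = fun=> 0v.
Proof.
move=> bf f0; apply: funext => t; apply: sa_norm_eq0.
by apply/le_anti; rewrite sa_norm_ge0 -f0 snorm_ub.
Qed.
Lemma snormD f g : norm_bounded f -> norm_bounded g ->
  snorm (fun t => f t +v g t) <= snorm f + snorm g.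
Proof.
move=> bf bg; apply: sup_range_le => [|t]; first by rewrite addr_ge0 ?snorm_ge0.
by rewrite (le_trans (sa_normD _ _)) ?lerD ?snorm_ub.
Qed.
Lemma snormZ a f : norm_bounded f ->
  snorm (fun t => a *:v f t) = Normc.normc a * snorm f.
Proof.
case=> M fM; under eq_fun do rewrite sa_normZ.
exact: sup_rangeZ (normc_ge0 a) (fun t => sa_norm_ge0 (f t)) fM.
Qed.
Lemma snormM f g : norm_bounded f -> norm_bounded g ->
  snorm (fun t => f t *v g t) <= snorm f * snorm g.
Proof.
move=> bf bg; apply: sup_range_le => [|t]; first by rewrite mulr_ge0 ?snorm_ge0.
by rewrite (le_trans (sa_normM _ _)) ?ler_pM ?sa_norm_ge0 ?snorm_ub.
Qed.
Lemma snorm_Cstar f : norm_bounded f ->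
  snorm (fun t => (f t)^*v *v f t) = snorm f ^+ 2.
Proof.
case=> M fM; under eq_fun do rewrite sa_norm_Cstar.
exact: sup_range_sqr (fun t => sa_norm_ge0 (f t)) fM.
Qed.

Lemma uniform_cauchy_cvg (u : nat -> X -> V) :
  (forall e, 0 < e -> exists N, forall m n, (N <= m)%N -> (N <= n)%N ->
     forall t, nv (u m t -v u n t) < e) ->
  exists l, forall e, 0 < e -> exists N, forall n, (N <= n)%N ->
     forall t, nv (u n t -v l t) < e.
Proof.
move=> u_cauchy.
have pointwise_cvg t : exists lim_t, forall e, 0 < e ->
    exists N, forall n, (N <= n)%N -> nv (u n t -v lim_t) < e.
  have [_ [_ [_ [_ [_ complete]]]]] := hV.
  have [|lim_t [_ ult]] := complete (u^~ t) (fun=> I).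
    by move=> e /u_cauchy[N uN]; exists N => m n mN nN; exact: uN.
  by exists lim_t.
have [l ul] := choice pointwise_cvg; exists l => e e_gt0.
have [N uN] := u_cauchy _ (divr_gt0 e_gt0 (ltr0n _ 2)).
exists N => n nN t; have [Nt uNt] := ul t _ (divr_gt0 e_gt0 (ltr0n _ 2)).
rewrite (le_lt_trans (seminorm_distD sa_norm_seminorm (u (maxn N Nt) t) _ _)) //.
by rewrite [e]splitr ltrD ?uN ?uNt ?leq_maxl ?leq_maxr.
Qed.

End SupNorm.

End CstarAlgebra.

Section Relaxed.
Variables (Sf : set (V -> R)) (X : topologicalType).
Implicit Types (f g : X -> V).

Definition relaxed_continuous f := forall t U,
  relaxed_nbhs o Sf (f t) U -> \forall s \near t, U (f s).

Lemma relaxed_continuousP f : relaxed_continuous f <->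
  forall t p, Sf p -> forall e, 0 < e -> \forall s \near t, p (f s -v f t) < e.
Proof.
split=> [fc t p Sfp e e_gt0 | fc t U [ps [e [Sfps [e_gt0 psU]]]]].
  apply: (fc t (fun b => p (b -v f t) < e)); exists [:: p], e.
  by split=> [q|]; [rewrite inE => /eqP-> | split=> // b; apply; rewrite mem_head].
suff: \forall s \near t, forall p, p \in ps -> p (f s -v f t) < e.
  by apply: filterS => s; exact: psU.
elim: ps Sfps {psU} => [|q ps IH] Sfps.
  by apply: nearW => s p; rewrite in_nil.
have := fc t q (Sfps q (mem_head _ _)) e e_gt0.
have := IH (fun p ps_p => Sfps p (mem_behead (s := q :: ps) ps_p)).
by apply: filterS2 => s ps_s q_s p; rewrite inE => /orP[/eqP->|/ps_s].
Qed.

Section RelaxedCstarAlgebra.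
Variable one : V.
Hypothesis hA : is_relaxed_Cstar_algebra o one Sf.

Lemma relaxed_Cstar_algebra : is_Cstar_algebra o setT.
Proof. by case: hA. Qed.
Let hV := relaxed_Cstar_algebra.

Lemma Sf_seminorm p : Sf p -> is_seminorm o p.
Proof. by case: hA => _ [_ [+ _]] => /[apply] -[]. Qed.

Lemma Sf_norm_small p e : Sf p -> 0 < e ->
  exists2 d, 0 < d & forall z, nv z < d -> p z < e.
Proof.
move=> Sfp e_gt0; have sp := Sf_seminorm Sfp.
have [_ [_ [/(_ p Sfp)[_ pc] _]]] := hA.
have [d [d_gt0 pd]] := pc 0v e e_gt0; exists d => // z nz.
have := pd z; rewrite sa_subr0 // seminorm0 // subr0 ger0_norm ?(seminorm_ge0 sp) //.
exact.
Qed.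

Lemma relaxed_nbhs_self (a : V) U : relaxed_nbhs o Sf a U -> U a.
Proof.
case=> ps [e [Sfps [e_gt0 psU]]]; apply: psU => p /Sfps/Sf_seminorm sp.
by rewrite sa_subrr // seminorm0.
Qed.

Lemma relaxed_continuous_cst (a : V) : relaxed_continuous (fun=> a).
Proof. by move=> t U /relaxed_nbhs_self Ua; exact: nearW. Qed.

Lemma relaxed_continuousD f g : relaxed_continuous f -> relaxed_continuous g ->
  relaxed_continuous (fun t => f t +v g t).
Proof.
move=> fc gc t W; case: hA => _ [_ [_ [_ [addc _ _]]]].
case/addc=> [U [W' [Ufx [W'gx UW']]]].
by apply: filterS2 (fc t U Ufx) (gc t W' W'gx) => s; exact: UW'.
Qed.

Lemma relaxed_continuousM f g : relaxed_continuous f -> relaxed_continuous g ->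
  relaxed_continuous (fun t => f t *v g t).
Proof.
move=> fc gc t W; case: hA => _ [_ [_ [_ [_ mulc _]]]].
case/mulc=> [U [W' [Ufx [W'gx UW']]]].
by apply: filterS2 (fc t U Ufx) (gc t W' W'gx) => s; exact: UW'.
Qed.

Lemma relaxed_continuous_star f : relaxed_continuous f ->
  relaxed_continuous (fun t => (f t)^*v).
Proof.
move=> fc t W; case: hA => _ [_ [_ [_ [_ _ starc]]]].
by case/starc=> [U [Ufx UW]]; apply: filterS (fc t U Ufx) => s; exact: UW.
Qed.

Lemma relaxed_continuousZ (a : R[i]) f : relaxed_continuous f ->
  relaxed_continuous (fun t => a *:v f t).
Proof.
move=> /relaxed_continuousP fc; apply/relaxed_continuousP => t p Sfp e e_gt0.
have sp := Sf_seminorm Sfp; have a1_gt0 : 0 < Normc.normc a + 1.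
  by rewrite ltr_wpDl ?normc_ge0.
apply: filterS (fc t p Sfp _ (divr_gt0 e_gt0 a1_gt0)) => s.
rewrite -sa_scalerBr // seminormZ // ltr_pdivlMr // => fst.
by apply: le_lt_trans fst; rewrite mulrC ler_wpM2l ?(seminorm_ge0 sp) ?lerDl.
Qed.

Lemma relaxed_continuousN f : relaxed_continuous f ->
  relaxed_continuous (fun t => -v f t).
Proof. under eq_fun do rewrite -sa_scaleN1r //; exact: relaxed_continuousZ. Qed.

Lemma relaxed_continuous_uniform_closed l :
  (forall d, 0 < d -> exists2 g, relaxed_continuous g & forall t, nv (g t -v l t) < d) ->
  relaxed_continuous l.
Proof.
move=> approx; apply/relaxed_continuousP => t p Sfp e e_gt0.
have sp := Sf_seminorm Sfp; have e3_gt0 : 0 < e / 3 by rewrite divr_gt0.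
have [d d_gt0 pd] := Sf_norm_small Sfp e3_gt0.
have [g /relaxed_continuousP gc gl] := approx d d_gt0.
apply: filterS (gc t p Sfp _ e3_gt0) => s gst.
rewrite (le_lt_trans (seminorm_distD hV sp (g s) _ _)) //.
rewrite (le_lt_trans (lerD (lexx _) (seminorm_distD hV sp (g t) _ _))) //.
have -> : e = e / 3 + (e / 3 + e / 3) by lra.
apply: ltrD; first by apply/pd; rewrite (seminorm_distC hV (sa_norm_seminorm hV)).
by apply: ltrD => //; apply/pd/gl.
Qed.

Local Notation CX := (@CX_boxtimes R X V o Sf).

Lemma CX0 : CX (fun=> 0v).
Proof. by split; [exact: norm_bounded0 | exact: relaxed_continuous_cst]. Qed.

Lemma CXD f g : CX f -> CX g -> CX (fun t => f t +v g t).
Proof.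
by move=> [bf cf] [bg cg]; split; [exact: norm_boundedD | exact: relaxed_continuousD].
Qed.

Lemma CXN f : CX f -> CX (fun t => -v f t).
Proof. by move=> [bf cf]; split; [exact: norm_boundedN | exact: relaxed_continuousN]. Qed.

Lemma CXZ (a : R[i]) f : CX f -> CX (fun t => a *:v f t).
Proof. by move=> [bf cf]; split; [exact: norm_boundedZ | exact: relaxed_continuousZ]. Qed.

Lemma CXM f g : CX f -> CX g -> CX (fun t => f t *v g t).
Proof.
by move=> [bf cf] [bg cg]; split; [exact: norm_boundedM | exact: relaxed_continuousM].
Qed.

Lemma CX_star f : CX f -> CX (fun t => (f t)^*v).
Proof.
by move=> [bf cf]; split; [exact: norm_bounded_star | exact: relaxed_continuous_star].
Qed.

Lemma CX_complete (u : nat -> X -> V) : (forall n, CX (u n)) ->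
  (forall e, 0 < e -> exists N, forall m n, (N <= m)%N -> (N <= n)%N ->
     sup (range (fun t => nv (u m t -v u n t))) < e) ->
  exists l, CX l /\ (forall e, 0 < e -> exists N, forall n, (N <= n)%N ->
     sup (range (fun t => nv (u n t -v l t))) < e).
Proof.
move=> CXu u_cauchy; have bu n : norm_bounded (u n) by case: (CXu n).
have [l ul] : exists l, forall e, 0 < e -> exists N, forall n, (N <= n)%N ->
    forall t, nv (u n t -v l t) < e.
  apply: uniform_cauchy_cvg => // e /u_cauchy[N uN]; exists N => m n mN nN t.
  have bumn := norm_boundedD hV (bu m) (norm_boundedN hV (bu n)).
  exact: le_lt_trans (snorm_ub t bumn) (uN m n mN nN).
have bl : norm_bounded l.
  have [N uN] := ul 1 ltr01; apply: (norm_bounded_approx hV (c := 1) (bu N)) => t.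
  by rewrite (seminorm_distC hV (sa_norm_seminorm hV)) ltW ?uN.
have cl : relaxed_continuous l.
  apply: relaxed_continuous_uniform_closed => d /ul[N uN].
  by exists (u N) => [|t]; [case: (CXu N) | exact: uN].
exists l; split=> // e e_gt0; have [N uN] := ul _ (divr_gt0 e_gt0 (ltr0n _ 2)).
exists N => n nN; apply: le_lt_trans (sup_range_le _ (fun t => ltW (uN n nN t))) _.
  by rewrite divr_ge0 ?ltW.
by rewrite ltr_pdivrMr // ltr_pMr ?ltr1n.
Qed.

End RelaxedCstarAlgebra.

End Relaxed.

End StarAlgebraOps.

Theorem lemma1 (R : realType) (X : topologicalType)
  (hX : compact [set: X]) (hH : hausdorff_space X)
  (V : Type) (o : star_alg_ops R V) (one : V) (Sf : set (V -> R))
  (hA : is_relaxed_Cstar_algebra o one Sf) :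
  is_Cstar_algebra (@fun_ops R X V o) (@CX_boxtimes R X V o Sf).
Proof.
have hV := relaxed_Cstar_algebra hA.
have [_ [vector_laws [algebra_laws [star_laws _]]]] := hV.
split.
  split; first exact: (CX0 X hA).
  split; first exact: (CXD hA).
  split; first exact: (CXN hA).
  split; first exact: (CXZ hA).
  split; first exact: (CXM hA).
  exact: (CX_star hA).
split.
  move: vector_laws => /= [? [? [? [? [? [? [? ?]]]]]]].
  by do !split=> * /=; apply: funext => ?; auto.
split.
  move: algebra_laws => /= [? [? [? [? ?]]]].
  by do !split=> * /=; apply: funext => ?; auto.
split.
  move: star_laws => /= [? [? [? ?]]].
  by do !split=> * /=; apply: funext => ?; auto.
split; last exact: (CX_complete hA).
split; first by move=> f [bf _]; exact: (snorm_ge0 hV bf).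
split; first by move=> f [bf _]; exact: (snorm_eq0 hV bf).
split; first by move=> f g [bf _] [bg _]; exact: (snormD hV bf bg).
split; first by move=> a f [bf _]; exact: (snormZ hV a bf).
split; first by move=> f g [bf _] [bg _]; exact: (snormM hV bf bg).
by move=> f [bf _]; exact: (snorm_Cstar hV bf).
Qed.
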